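(* Let $f\colon\mathbb R\to\mathbb R$ be continuous and suppose there are $a>0$ and $b\in\mathbb R$ with $|f(x)|\leqslant a\cosh(bx)$ for all $x$. Fix $\lambda>0$, let $P_n = e^{-\lambda}\lambda^n/n!$, and for $k\geqslant1$ let $h_k\colon y\mapsto f(y)/k$. For a compactly supported Borel probability measure $\rho$ on $\mathbb R$ and $x\in\mathbb R$ define the probability measures $$\sigma^{f,\rho}_x = \sum_{n=0}^\infty P_n\,(h_{n+1})_\star\big(\delta_x*\rho^{*n}\big),\qquad \sigma^{f,\rho} = \sum_{n=0}^\infty P_n\,(h_{n+1})_\star\big(\rho^{*(n+1)}\big),$$ where $(h_k)_\star$ is pushforward, $*$ is convolution and $\rho^{*0}=\delta_0$. Then for every compactly supported probability measure $\rho$ and every $x\in\mathbb R$, the expectations $\langle\sigma^{f,\rho}_x, y\rangle$ and $\langle\sigma^{f,\rho},y\rangle$ are finite; equivalently, $$\sum_{n=0}^\infty \frac{e^{-\lambda}\lambda^n}{(n+1)!}\big|\langle\delta_x*\rho^{*n}, f\rangle\big|<\infty \quad\text{and}\quad \sum_{n=0}^\infty \frac{e^{-\lambda}\lambda^n}{(n+1)!}\big|\langle\rho^{*(n+1)}, f\rangle\big|<\infty.$$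
   Context: $\langle\tau,\phi\rangle=\int\phi\,d\tau$; $\delta_a$ is the Dirac measure at $a$; $\cosh$ is the hyperbolic cosine. Here $\langle\sigma,y\rangle$ denotes the mean $\int y\,d\sigma(y)$. *)

From HB Require Import structures.
From mathcomp Require Import all_boot all_order all_algebra.
From mathcomp Require Import all_classical all_reals all_analysis.
Set Implicit Arguments. Unset Strict Implicit. Unset Printing Implicit Defensive.
Import Order.TTheory GRing.Theory Num.Theory.
Import numFieldNormedType.Exports.
Local Open Scope classical_set_scope.
Local Open Scope ring_scope.

Section defs.
Context {R : realType}.

Definition coshR (x : R) : R := (expR x + expR (- x)) / 2.

Definition poisson_w (lam : R) (n : nat) : R :=
  expR (- lam) * lam ^+ n / (n`!)%:R.

Definition hk (f : R -> R) (k : nat) : R -> R := fun y => f y / k%:R.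

Definition delta (a : R) : set R -> \bar R := @dirac _ R a R.

Definition mconv (mu nu : set R -> \bar R) : set R -> \bar R :=
  pushforward (mu \x nu)%E (fun p : R * R => p.1 + p.2).

Fixpoint conv_pow (rho : set R -> \bar R) (n : nat) : set R -> \bar R :=
  match n with
  | O => delta 0
  | S m => mconv (conv_pow rho m) rho
  end.

Definition sigma_x (lam : R) (f : R -> R) (rho : set R -> \bar R) (x : R)
  : set R -> \bar R :=
  fun A => (\sum_(0 <= n <oo)
    (poisson_w lam n)%:E *
      pushforward (mconv (delta x) (conv_pow rho n)) (hk f n.+1) A)%E.

Definition sigma_f (lam : R) (f : R -> R) (rho : set R -> \bar R)
  : set R -> \bar R :=
  fun A => (\sum_(0 <= n <oo)
    (poisson_w lam n)%:E * pushforward (conv_pow rho n.+1) (hk f n.+1) A)%E.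

Definition compactly_supported (rho : set R -> \bar R) : Prop :=
  exists K : set R, compact K /\ rho (~` K) = 0%E.

End defs.

(* If rho is carried by [-K, K], then delta_x * rho^{*n} is carried by
   [-(|x| + nK), |x| + nK] and rho^{*(n+1)} by [-(n+1)K, (n+1)K].  Since
   cosh t <= e^|t|, on [-r, r] we have |f| <= a e^{|b| r}, and |h_{n+1}| <= |f|.
   Hence the n-th term of each series, as well as the n-th summand of
   \int |y| d sigma = sum_n P_n \int |h_{n+1}|, is at most
   P_n a e^{|b| (c + nK)} = C (lam e^{|b| K})^n / n! (with c = |x|, resp. K),
   the general term of a convergent exponential series. *)

From HB Require Import structures.
From mathcomp Require Import all_boot all_order all_algebra.
From mathcomp Require Import all_classical all_reals all_analysis.
From mathcomp Require Import measurable_realfun ring lra.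
Set Implicit Arguments.
Unset Strict Implicit.
Unset Printing Implicit Defensive.
Import Order.TTheory GRing.Theory Num.Theory.
Import numFieldNormedType.Exports.
Local Open Scope classical_set_scope.
Local Open Scope ring_scope.

Section convolution.
Context {R : realType}.
Local Open Scope ereal_scope.

Definition add_pair (p : R * R) : R := (p.1 + p.2)%R.

Lemma measurable_add_pair : measurable_fun setT add_pair.
Proof. exact: measurable_funD. Qed.

HB.instance Definition _ :=
  isMeasurableFun.Build _ _ _ _ add_pair measurable_add_pair.

Definition conv_prob (M N : probability R R) : probability R R :=
  distribution (M \x N) add_pair.

Fixpoint conv_pow_prob (rho : probability R R) (n : nat) : probability R R :=
  if n is m.+1 then conv_prob (conv_pow_prob rho m) rho else \d_(0%R : R).

Lemma conv_powE (rho : probability R R) :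
  conv_pow rho = fun n => conv_pow_prob rho n.
Proof. by apply/funext; elim=> //= n ->. Qed.

End convolution.

Section support.
Context {R : realType}.

Definition supported_in (mu : set R -> \bar R) (r : R) : Prop :=
  mu [set y : R | r < `|y|] = 0%E.

Lemma measurable_norm_gt (r : R) : measurable [set y : R | r < `|y|].
Proof.
rewrite (_ : [set y | _] = Num.norm @^-1` `]r, +oo[%classic); last first.
  by apply/seteqP; split=> y /=; rewrite in_itv /= andbT.
by rewrite -[X in measurable X]setTI; exact: normr_measurable (measurable_itv _).
Qed.

Lemma supported_in_dirac (x : R) : supported_in \d_x `|x|.
Proof. by rewrite /supported_in diracE memNset//= ltxx. Qed.

Lemma supported_in_conv (M N : probability R R) r s :
  supported_in M r -> supported_in N s -> supported_in (conv_prob M N) (r + s).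
Proof.
move=> Mr Ns; have mM := measurable_norm_gt r; have mN := measurable_norm_gt s.
have sub : add_pair @^-1` [set y : R | r + s < `|y|] `<=`
    [set y : R | r < `|y|] `*` [set: R] `|` [set: R] `*` [set y : R | s < `|y|].
  move=> [p q] /= rs_lt.
  have [pr|] := leP `|p| r; last by left.
  have [qs|] := leP `|q| s; last by right.
  by move: rs_lt; rewrite ltNge (le_trans (ler_normD _ _))// lerD.
apply: subset_measure0 sub _.
- rewrite -[X in measurable X]setTI.
  exact: measurable_add_pair (measurable_norm_gt _).
- by apply: measurableU; exact: measurableX.
rewrite [LHS]measureU0; try exact: measurableX.
- by rewrite [LHS]product_measure1E// [X in (X * _)%E]Mr mul0e.
- by rewrite [LHS]product_measure1E// [X in (_ * X)%E]Ns mule0.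
Qed.

Lemma supported_in_conv_pow (rho : probability R R) K n :
  supported_in rho K -> supported_in (conv_pow_prob rho n) (n%:R * K).
Proof.
move=> rhoK; elim: n => [|n IH] /=.
  by rewrite mul0r -[X in supported_in _ X](normr0 R); exact: supported_in_dirac.
by rewrite -addn1 natrD mulrDl mul1r; exact: supported_in_conv.
Qed.

Lemma compactly_supported_supported_in (rho : probability R R) :
  compactly_supported rho -> exists K, supported_in rho K.
Proof.
case=> S [cS rhoS]; have [r [_ Sr]] := compact_bounded cS.
exists (`|r| + 1); apply: subset_measure0 rhoS => //.
- exact: measurable_norm_gt.
- exact: measurableC (closed_measurable (compact_closed (@Rhausdorff R) cS)).
move=> y /= ry Sy; move: ry; rewrite ltNge (Sr (`|r| + 1))//.
by rewrite (le_lt_trans (ler_norm r))// ltrDl.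
Qed.

Lemma integral_le_supported_in (M : probability R R) (r C : R) (g : R -> \bar R) :
  measurable_fun setT g -> (forall y, 0 <= g y)%E -> 0 <= C ->
  (forall y, `|y| <= r -> (g y <= C%:E)%E) -> supported_in M r ->
  (\int[M]_y g y <= C%:E)%E.
Proof.
move=> mg g0 C0 gC Mr; apply: (le_trans (y := (\int[M]_y cst C%:E y)%E)).
  apply: ae_ge0_le_integral => //.
  exists [set y | r < `|y|]; split; [exact: measurable_norm_gt|exact: Mr|].
  by move=> y /= gyC; rewrite ltNge; apply/negP => /gC.
by rewrite integral_cst//= probability_setT mule1.
Qed.

End support.

Section growth.
Context {R : realType}.

Lemma coshR_le_expR_norm (t : R) : coshR t <= expR `|t|.
Proof.
have : expR t <= expR `|t| by rewrite ler_expR ler_norm.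
have : expR (- t) <= expR `|t| by rewrite ler_expR -normrN ler_norm.
rewrite /coshR; lra.
Qed.

Lemma coshR_growth (g : R -> R) (a b : R) : 0 <= a ->
  (forall y, `|g y| <= a * coshR (b * y)) ->
  forall y, `|g y| <= a * expR (`|b| * `|y|).
Proof.
move=> a_ge0 g_le y; apply: le_trans (g_le y) _; rewrite ler_wpM2l//.
by rewrite -normrM coshR_le_expR_norm.
Qed.

End growth.

Section poisson_series.
Context {R : realType}.
Local Open Scope ereal_scope.

Lemma exp_coeff_series_lty (q : R) :
  \sum_(0 <= n <oo) (q ^+ n / n`!%:R)%:E < +oo.
Proof.
rewrite (_ : \sum_(0 <= n <oo) _ = limn (EFin \o series (exp_coeff q))).
  by rewrite EFin_lim ?ltry//; exact: is_cvg_series_exp_coeff.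
by congr (limn _); apply/funext => n; rewrite /series /= sumEFin.
Qed.

Lemma poisson_w_ge0 (lam : R) n : (0 <= lam)%R -> (0 <= poisson_w lam n)%R.
Proof. by move=> lam_ge0; rewrite /poisson_w !mulr_ge0 ?expR_ge0 ?exprn_ge0. Qed.

Lemma poisson_w_fact_succ_le (lam : R) n : (0 <= lam)%R ->
  (expR (- lam) * lam ^+ n / (n.+1)`!%:R <= poisson_w lam n)%R.
Proof.
move=> lam_ge0; rewrite /poisson_w ler_wpM2l ?mulr_ge0 ?expR_ge0 ?exprn_ge0//.
by rewrite lef_pV2 ?posrE ?ltr0n ?fact_gt0// ler_nat factS leq_pmull.
Qed.

Lemma poisson_expR_series_lty (lam a B c K : R) : (0 <= lam)%R -> (0 <= a)%R ->
  \sum_(0 <= n <oo)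
    (poisson_w lam n * (a * expR (B * (c + n%:R * K))))%:E < +oo.
Proof.
move=> lam_ge0 a_ge0.
pose C := (expR (- lam) * a * expR (B * c))%R.
pose q := (lam * expR (B * K))%R.
have termE n : (poisson_w lam n * (a * expR (B * (c + n%:R * K)))
    = C * (q ^+ n / n`!%:R))%R.
  rewrite /poisson_w /C /q mulrDr expRD (mulrCA B n%:R K) expRM_natl exprMn.
  by field; rewrite pnatr_eq0 -lt0n fact_gt0.
under eq_eseriesr do rewrite termE EFinM.
rewrite nneseriesZl; last first.
  by move=> n _; rewrite lee_fin divr_ge0// exprn_ge0// mulr_ge0// expR_ge0.
by rewrite lte_mul_pinfty ?lee_fin ?mulr_ge0 ?expR_ge0//; exact: exp_coeff_series_lty.
Qed.

End poisson_series.

Section poisson_mixture.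
Context {R : realType} (lam a B : R) (f : R -> R).
Hypotheses (lam_ge0 : 0 <= lam) (B_ge0 : 0 <= B) (mf : measurable_fun setT f).
Hypothesis f_growth : forall y, `|f y| <= a * expR (B * `|y|).
Local Open Scope ereal_scope.

Let a_ge0 : (0 <= a)%R.
Proof. by have := f_growth 0; rewrite normr0 mulr0 expR0 mulr1; exact: le_trans. Qed.

Lemma measurable_hk k : measurable_fun setT (hk f k).
Proof. exact: measurable_funM mf (measurable_cst _). Qed.

HB.instance Definition _ k :=
  isMeasurableFun.Build _ _ _ _ (hk f k) (measurable_hk k).

Lemma hk_growth k : (0 < k)%N -> forall y, (`|hk f k y| <= a * expR (B * `|y|))%R.
Proof.
move=> k_gt0 y; apply: le_trans (f_growth y).
by rewrite /hk normrM normfV normr_nat ler_piMr// invf_le1 ?ler1n ?ltr0n.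
Qed.

Lemma integral_abs_le_growth (M : probability R R) r (g : R -> R) :
  measurable_fun setT g -> (forall y, `|g y| <= a * expR (B * `|y|))%R ->
  supported_in M r -> \int[M]_y `|(g y)%:E| <= (a * expR (B * r))%:E.
Proof.
move=> mg g_growth; apply: integral_le_supported_in => //.
- exact/measurable_EFinP/measurableT_comp.
- by rewrite mulr_ge0// expR_ge0.
move=> y yr; rewrite lee_fin (le_trans (g_growth y))// ler_wpM2l// ler_expR.
exact: ler_wpM2l.
Qed.

Variables (M : nat -> probability R R) (c K : R).
Hypothesis M_supp : forall n, supported_in (M n) (c + n%:R * K).

Definition poisson_mixture : {measure set R -> \bar R} :=
  mseries (fun n => mscale (NngNum (poisson_w_ge0 n lam_ge0))
                           (distribution (M n) (hk f n.+1))) 0.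

Lemma integrable_poisson_mixture : poisson_mixture.-integrable setT EFin.
Proof.
have m_abs : measurable_fun setT (fun y : R => `|y%:E|).
  by apply: measurableT_comp; [exact: abse_measurable|exact: EFin_measurable].
apply/integrableP; split; first exact/measurable_EFinP.
rewrite ge0_integral_measure_series//.
apply: le_lt_trans (poisson_expR_series_lty B c K lam_ge0 a_ge0).
apply: lee_nneseries => [n _ _|n _]; first exact: integral_ge0.
rewrite ge0_integral_mscale// ge0_integral_distribution// [leRHS]EFinM.
apply: lee_pmul => //; first by apply: integral_ge0 => y _; exact: abse_ge0.
exact: integral_abs_le_growth (measurable_hk _) (hk_growth _) (M_supp n).
Qed.

Lemma poisson_integral_series_lty :
  \sum_(0 <= n <oo)
     (expR (- lam) * lam ^+ n / (n.+1)`!%:R)%:E * `| \int[M n]_y (f y)%:E |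
  < +oo.
Proof.
apply: le_lt_trans (poisson_expR_series_lty B c K lam_ge0 a_ge0).
have w_ge0 n : (0 <= expR (- lam) * lam ^+ n / (n.+1)`!%:R)%R.
  by rewrite divr_ge0// mulr_ge0 ?expR_ge0// exprn_ge0.
apply: lee_nneseries => [n _ _|n _]; first by rewrite mule_ge0 ?lee_fin.
rewrite [leRHS]EFinM; apply: lee_pmul => //.
- by rewrite lee_fin w_ge0.
- by rewrite lee_fin poisson_w_fact_succ_le.
- apply: le_trans (integral_abs_le_growth mf f_growth (M_supp n)).
  exact/le_abse_integral/measurable_EFinP.
Qed.

End poisson_mixture.

Theorem theorem4 (R : realType) (f : R -> R) (a b lam : R)
  (f_cont : continuous f) (a_pos : 0 < a)
  (f_bound : forall x, `|f x| <= a * coshR (b * x))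
  (lam_pos : 0 < lam)
  (rho : probability R R) (rho_cpt : compactly_supported rho) (x : R) :
  [/\ (sigma_x lam f rho x).-integrable setT (fun y => y%:E),
      (sigma_f lam f rho).-integrable setT (fun y => y%:E),
      (\sum_(0 <= n <oo)
         (expR (- lam) * lam ^+ n / (n.+1)`!%:R)%:E *
         `| \int[mconv (delta x) (conv_pow rho n)]_y (f y)%:E |
         < +oo)%E
    & (\sum_(0 <= n <oo)
         (expR (- lam) * lam ^+ n / (n.+1)`!%:R)%:E *
         `| \int[conv_pow rho n.+1]_y (f y)%:E | < +oo)%E].
Proof.
have lam_ge0 := ltW lam_pos.
have mf := continuous_measurable_fun f_cont.
have f_growth := coshR_growth (ltW a_pos) f_bound.
have [K rhoK] := compactly_supported_supported_in rho_cpt.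
have Mx_supp n :
    supported_in (conv_prob \d_x (conv_pow_prob rho n)) (`|x| + n%:R * K).
  exact: supported_in_conv (supported_in_dirac x) (supported_in_conv_pow n rhoK).
have Mf_supp n : supported_in (conv_pow_prob rho n.+1) (K + n%:R * K).
  by rewrite addrC; exact: supported_in_conv (supported_in_conv_pow n rhoK) rhoK.
(* Unfolded, sigma_x and sigma_f are the Poisson mixtures of these laws. *)
rewrite /sigma_x /sigma_f conv_powE; split.
- exact (integrable_poisson_mixture lam_ge0 (normr_ge0 b) mf f_growth Mx_supp).
- exact (integrable_poisson_mixture lam_ge0 (normr_ge0 b) mf f_growth Mf_supp).
- exact (poisson_integral_series_lty lam_ge0 (normr_ge0 b) mf f_growth Mx_supp).
- exact (poisson_integral_series_lty lam_ge0 (normr_ge0 b) mf f_growth Mf_supp).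
Qed.
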